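(* For non-negative integers $n$ let $$S_n=\sum_{k=0}^{n-3}(-1)^k\binom{2k}{k}\binom{n-3}{k}\binom{k}{n-k-3}$$ (so $S_0=S_1=S_2=0$, the sum being empty). Then for every non-negative integer $n$, $$S_{3n}\equiv S_{3n+1}\equiv -S_{3n+2}\pmod 3,\qquad S_{4n+2}\equiv 0\pmod 4,$$ and for every positive integer $n$, $$S_{n+2}+12S_{n+1}+16S_n\equiv 0\pmod n.$$
   Context: Binomial coefficients $\binom{a}{b}$ are zero when $b<0$ or $b>a$. *)

From mathcomp Require Import all_boot all_order all_algebra.
Set Implicit Arguments. Unset Strict Implicit. Unset Printing Implicit Defensive.
Import GRing.Theory Num.Theory.
Local Open Scope ring_scope.

(* The range 0 <= k < n-2 (truncated nat subtraction) is exactly k = 0..n-3,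
   empty when n <= 2.  Inside the range n-k-3 >= 0, so nat subtraction is exact. *)
Definition S (n : nat) : int :=
  \sum_(0 <= k < n - 2)
    (-1) ^+ k * ('C(k.*2, k) * 'C(n - 3, k) * 'C(k, n - k - 3))%:Z.

From HB Require Import structures.
From mathcomp Require Import all_boot all_order all_algebra.
From mathcomp Require Import ring.
Set Implicit Arguments.
Unset Strict Implicit.
Unset Printing Implicit Defensive.
Import GRing.Theory Num.Theory.
Local Open Scope ring_scope.

(* For n = m + 3, S_n is the diagonal coefficient [x^m y^m] of Psi^m, where
   Psi = y - x(1 + x)(1 + y)^2 (binomial theorem).  The Euler operators
   thetaX = x d/dx and thetaY = y d/dy are derivations, and the coefficient of
   x^n y^n in thetaX F + thetaY G is n times the sum of those of F and G.
   Multiplying an identity  Psi (thetaX a + thetaY b) - 2 (thetaX Psi a + thetaY Psi b) = t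
   by Psi^m turns Psi^m t into thetaX (Psi^(m+1) a) + thetaY (Psi^(m+1) b) minus
   (m + 3) times a polynomial, so m + 3 divides [x^(m+3) y^(m+3)] (Psi^m t).
   Two such certificates give n | S_(n+2) + 12 S_(n+1) + 16 S_n and
   n | 16 (S_(n+1) + 2 S_n); the congruences mod 3 and mod 4 are integer
   combinations of these. *)

Definition derivation (R : nzRingType) (D : R -> R) :=
  forall a b, D (a * b) = D a * b + a * D b.

Lemma derivation_exp (R : comNzRingType) (D : R -> R) :
  derivation D -> forall x k, D (x ^+ k.+1) = x ^+ k * D x *+ k.+1.
Proof.
move=> DM x; elim=> [|k IH]; first by rewrite expr1 expr0 mul1r.
by rewrite (exprS x k.+1) DM IH mulrnAr mulrA -exprS (mulrC (D x)) [in RHS]mulrS.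
Qed.

Lemma map_poly_derivation (R : nzRingType) (D : {additive R -> R}) :
  derivation D -> derivation (map_poly D).
Proof.
move=> DM p q; apply/polyP=> i.
rewrite coefD !coef_map !coefM raddf_sum -big_split /=.
by apply: eq_bigr => j _; rewrite DM !coef_map.
Qed.

Section EulerOperator.
Variable R : comNzRingType.

Definition euler (p : {poly R}) : {poly R} := 'X * p^`().

Fact euler_is_nmod_morphism : nmod_morphism euler.
Proof. by split=> [|p q]; rewrite /euler ?deriv0 ?mulr0 // derivD mulrDr. Qed.

HB.instance Definition _ :=
  GRing.isNmodMorphism.Build {poly R} {poly R} euler euler_is_nmod_morphism.

Lemma euler_derivation : derivation euler.
Proof. by move=> p q; rewrite /euler derivM; ring. Qed.

Lemma eulerM p q : euler (p * q) = euler p * q + p * euler q.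
Proof. exact: euler_derivation. Qed.

Lemma euler_exp p k : euler (p ^+ k.+1) = p ^+ k * euler p *+ k.+1.
Proof. by apply: derivation_exp; apply: euler_derivation. Qed.

Lemma eulerC c : euler c%:P = 0.
Proof. by rewrite /euler derivC mulr0. Qed.

Lemma eulerXn n : euler 'X^n = 'X^n *+ n.
Proof. by case: n => [|n]; rewrite /euler derivXn ?mulr0n ?mulr0 // mulrnAr -exprS. Qed.

Lemma coef_euler p n : (euler p)`_n = p`_n *+ n.
Proof. by rewrite /euler coefXM; case: n => [|n]; rewrite ?mulr0n // coef_deriv. Qed.

End EulerOperator.

Section Bivariate.
Variable R : comNzRingType.
Local Notation P := {poly {poly R}}.
Local Notation Y := ('X%:P : P).
Local Notation thetaX := (@euler {poly R}).
Local Notation thetaY := (map_poly (@euler R)).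

(* x is the outer variable 'X and y the constant polynomial 'X%:P;
   [monomial (c, i, j)] is c x^i y^j. *)

Lemma thetaY_derivation : derivation thetaY.
Proof. exact: map_poly_derivation (@euler_derivation R). Qed.

Lemma thetaYM p q : thetaY (p * q) = thetaY p * q + p * thetaY q.
Proof. exact: thetaY_derivation. Qed.

Lemma thetaY_exp p k : thetaY (p ^+ k.+1) = p ^+ k * thetaY p *+ k.+1.
Proof. by apply: derivation_exp; apply: thetaY_derivation. Qed.

Definition monomial (t : int * nat * nat) : P := t.1.1%:~R * 'X ^+ t.1.2 * Y ^+ t.2.

Definition poly_of_terms (s : seq (int * nat * nat)) : P := \sum_(t <- s) monomial t.

Lemma thetaX_monomial t : thetaX (monomial t) = monomial t *+ t.1.2.
Proof.
case: t => [[c i] j]; rewrite /monomial /= !eulerM eulerXn.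
rewrite -(rmorph_int (@polyC {poly R}) c) -polyC_exp !eulerC; ring.
Qed.

Lemma thetaY_monomial t : thetaY (monomial t) = monomial t *+ t.2.
Proof.
case: t => [[c i] j]; rewrite /monomial /= !thetaYM -polyC_exp.
rewrite -(rmorph_int (@polyC {poly R}) c) !map_polyC /= eulerXn.
have -> : thetaY 'X^i = 0.
  by apply/polyP=> k; rewrite coef_map coefXn coef0 /= -polyC_natr eulerC.
rewrite -(rmorph_int (@polyC R) c) eulerC polyCMn; ring.
Qed.

Lemma thetaX_poly_of_terms s :
  thetaX (poly_of_terms s) = \sum_(t <- s) monomial t *+ t.1.2.
Proof. by rewrite raddf_sum; apply: eq_bigr => t _; rewrite /= thetaX_monomial. Qed.

Lemma thetaY_poly_of_terms s :
  thetaY (poly_of_terms s) = \sum_(t <- s) monomial t *+ t.2.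
Proof. by rewrite raddf_sum; apply: eq_bigr => t _; rewrite /= thetaY_monomial. Qed.

Definition diag_coef n (p : P) : R := p`_n`_n.

Fact diag_coef_is_nmod_morphism n : nmod_morphism (diag_coef n).
Proof. by split=> [|p q]; rewrite /diag_coef ?coef0 // !coefD. Qed.

HB.instance Definition _ n :=
  GRing.isNmodMorphism.Build P R (diag_coef n) (diag_coef_is_nmod_morphism n).

Lemma diag_coef_euler n F G :
  diag_coef n (thetaX F + thetaY G) = (diag_coef n F + diag_coef n G) *+ n.
Proof.
by rewrite /diag_coef coefD coef_euler coef_map coefD coefMn coef_euler mulrnDl.
Qed.

Lemma diag_coef_XYM n k p :
  (k <= n)%N -> diag_coef n (('X * Y) ^+ k * p) = diag_coef (n - k) p.
Proof.
move=> kn; rewrite /diag_coef exprMn -polyC_exp -mulrA coefXnM ltnNge kn /=.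
by rewrite coefCM coefXnM ltnNge kn.
Qed.

Lemma diag_coef_certificate Psi a b k m :
  exists c, diag_coef (m.+1 + k) (Psi ^+ m *
    (Psi * (thetaX a + thetaY b) - (thetaX Psi * a + thetaY Psi * b) *+ k))
    = c *+ (m.+1 + k).
Proof.
set n := (m.+1 + k)%N; set E := thetaX Psi * a + thetaY Psi * b.
exists (diag_coef n (Psi ^+ m.+1 * a) + diag_coef n (Psi ^+ m.+1 * b)
        - diag_coef n (Psi ^+ m * E)).
have -> : Psi ^+ m * (Psi * (thetaX a + thetaY b) - E *+ k) =
    thetaX (Psi ^+ m.+1 * a) + thetaY (Psi ^+ m.+1 * b) - (Psi ^+ m * E) *+ n.
  by rewrite eulerM thetaYM euler_exp thetaY_exp exprS /E /n; ring.
by rewrite raddfB raddfMn /= diag_coef_euler mulrnBl.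
Qed.

End Bivariate.

Arguments monomial {R} t.
Arguments poly_of_terms {R} s.

Lemma coef_1DX_exp (R : nzRingType) n k : ((1 + 'X : {poly R}) ^+ n)`_k = 'C(n, k)%:R.
Proof.
elim: n k => [|n IH] k; first by rewrite expr0 coefC bin0n; case: k.
rewrite exprS mulrDl mul1r coefD coefXM IH; case: k => [|k] /=.
  by rewrite addr0 !bin0.
by rewrite IH binS natrD addrC.
Qed.

Local Notation P := {poly {poly int}}.
Local Notation Y := ('X%:P : P).
Local Notation thetaX := (@euler {poly int}).
Local Notation thetaY := (map_poly (@euler int)).

Definition Psi : P := Y - 'X * (1 + 'X) * (1 + Y) ^+ 2.

Lemma Psi_exp_term m i :
  Y ^+ (m - i) * (- ('X * (1 + 'X) * (1 + Y) ^+ 2)) ^+ i =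
  'X ^+ i * (1 + 'X) ^+ i * ('X ^+ (m - i) * (1 + 'X) ^+ i.*2 * ((-1) ^+ i)%:P)%:P.
Proof.
rewrite !(polyCM, polyC_exp, polyCD, polyCN, polyC1).
by rewrite exprNn !exprMn -exprD addnn; ring.
Qed.

Lemma S_diag_coef m : S m.+3 = diag_coef m (Psi ^+ m).
Proof.
rewrite /S !subSS subn0 /diag_coef /Psi exprDn coef_sum big_mkord coef_sum.
apply: eq_bigr => -[i /=]; rewrite ltnS => le_im _.
rewrite -addn3 subnAC addnK subn0 coefMn Psi_exp_term coefMC coefXnM ltnNge le_im /=.
rewrite coef_1DX_exp coefMn mulr_natl coefMn coefMC coefXnM ltnNge leq_subr /=.
rewrite subKn // coef_1DX_exp -(mulr_natr _ 'C(m, i)) -(mulr_natr _ 'C(i, m - i)).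
by rewrite !PoszM !natz; ring.
Qed.

Lemma Psi_terms : Psi = poly_of_terms
  [:: (-1, 1, 0); (1, 0, 1); (-2, 1, 1); (-1, 1, 2); (-1, 2, 0); (-2, 2, 1); (-1, 2, 2)].
Proof. by rewrite /Psi /poly_of_terms !big_cons big_nil /monomial /=; ring. Qed.

(* Certificates found by computer algebra. *)
Definition rec3_a : P := poly_of_terms
  [:: (1, 1, 2); (3, 2, 2); (-6, 2, 3); (2, 3, 1); (2, 3, 2); (-6, 3, 3)].

Definition rec3_b : P := poly_of_terms
  [:: (4, 1, 2); (-5, 2, 1); (-4, 2, 2); (1, 2, 3); (2, 3, 0); (9, 3, 1); (14, 3, 2);
      (7, 3, 3)].

Definition rec2_a : P := poly_of_terms
  [:: (8, 2, 2); (-3, 2, 3); (1, 2, 4); (1, 3, 1); (6, 3, 2); (-11, 3, 3); (-4, 3, 4);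
      (-1, 3, 5); (-5, 4, 2); (-12, 4, 3); (-9, 4, 4); (-2, 4, 5); (-2, 5, 2);
      (-5, 5, 3); (-4, 5, 4); (-1, 5, 5)].

Definition rec2_b : P := poly_of_terms
  [:: (1, 1, 2); (-2, 2, 1); (3, 2, 2); (4, 2, 3); (-1, 2, 4); (1, 3, 0); (7, 3, 1);
      (18, 3, 2); (13, 3, 3); (2, 3, 4); (1, 3, 5); (-1, 4, 0); (-4, 4, 1); (-4, 4, 2);
      (2, 4, 3); (5, 4, 4); (2, 4, 5); (-1, 5, 0); (-4, 5, 1); (-5, 5, 2); (-1, 5, 3);
      (2, 5, 4); (1, 5, 5)].

Lemma rec3_certificate :
  Psi * (thetaX rec3_a + thetaY rec3_b)
    - (thetaX Psi * rec3_a + thetaY Psi * rec3_b) *+ 2 =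
  'X * Y * Psi ^+ 2 + ('X * Y) ^+ 2 * Psi *+ 12 + ('X * Y) ^+ 3 *+ 16.
Proof.
rewrite Psi_terms /rec3_a /rec3_b !thetaX_poly_of_terms !thetaY_poly_of_terms.
by rewrite /poly_of_terms !big_cons !big_nil /monomial /=; ring.
Qed.

Lemma rec2_certificate :
  Psi * (thetaX rec2_a + thetaY rec2_b)
    - (thetaX Psi * rec2_a + thetaY Psi * rec2_b) *+ 2 =
  (('X * Y) ^+ 2 * Psi + ('X * Y) ^+ 3 *+ 2) *+ 16.
Proof.
rewrite Psi_terms /rec2_a /rec2_b !thetaX_poly_of_terms !thetaY_poly_of_terms.
by rewrite /poly_of_terms !big_cons !big_nil /monomial /=; ring.
Qed.

Lemma dvdz_natmul (x : int) n : (n%:Z %| x *+ n)%Z.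
Proof. by rewrite -mulr_natr natz dvdz_mull. Qed.

Lemma dvdz_certified_diag_coef a b t m :
  Psi * (thetaX a + thetaY b) - (thetaX Psi * a + thetaY Psi * b) *+ 2 = t ->
  (m.+3%:Z %| diag_coef m.+3 (Psi ^+ m * t))%Z.
Proof.
move=> <-; have [c] := diag_coef_certificate Psi a b 2 m.
by rewrite addn2 => ->; apply: dvdz_natmul.
Qed.

Lemma dvdz_S_rec3 n : (n%:Z %| S (n + 2) + 12 * S (n + 1) + 16 * S n)%Z.
Proof.
case: n => [|[|[|m]]]; try by rewrite /S !unlock.
have := dvdz_certified_diag_coef m rec3_certificate.
have -> : Psi ^+ m * ('X * Y * Psi ^+ 2 + ('X * Y) ^+ 2 * Psi *+ 12 + ('X * Y) ^+ 3 *+ 16)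
    = ('X * Y) ^+ 1 * Psi ^+ m.+2 + ('X * Y) ^+ 2 * Psi ^+ m.+1 *+ 12
      + ('X * Y) ^+ 3 * Psi ^+ m *+ 16 by rewrite !exprS; ring.
rewrite 2!raddfD 2!raddfMn /= !diag_coef_XYM // !subSS !subn0 !mulr_natl.
by rewrite !addnS !addn0 !S_diag_coef.
Qed.

Lemma dvdz_S_rec2 n : (n%:Z %| (S (n + 1) + 2 * S n) * 16)%Z.
Proof.
case: n => [|[|[|m]]]; try by rewrite /S !unlock.
have := dvdz_certified_diag_coef m rec2_certificate.
have -> : Psi ^+ m * ((('X * Y) ^+ 2 * Psi + ('X * Y) ^+ 3 *+ 2) *+ 16)
    = (('X * Y) ^+ 2 * Psi ^+ m.+1 + ('X * Y) ^+ 3 * Psi ^+ m *+ 2) *+ 16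
  by rewrite !exprS; ring.
rewrite raddfMn raddfD raddfMn /= !diag_coef_XYM // !subSS !subn0.
by rewrite !addnS !addn0 !S_diag_coef mulr_natl mulr_natr.
Qed.

Lemma recurrences_mod3 (s0 s1 s2 : int) :
  (3 %| s2 + 12 * s1 + 16 * s0)%Z -> (3 %| (s1 + 2 * s0) * 16)%Z ->
  (s0 = s1 %[mod 3])%Z /\ (s1 = - s2 %[mod 3])%Z.
Proof.
move=> rec3 rec2; split; apply/eqP; rewrite eqz_mod_dvd.
  have -> : (s0 - s1 = (5 * s1 + 11 * s0) * 3 - (s1 + 2 * s0) * 16)%Z by ring.
  by rewrite rpredB //; exact: dvdz_mull (dvdzz 3).
have -> : (s1 - - s2 = s2 + 12 * s1 + 16 * s0 + (s1 + 2 * s0) * 16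
                       - (9 * s1 + 16 * s0) * 3)%Z by ring.
by rewrite rpredB ?(rpredD rec3 rec2) //; exact: dvdz_mull (dvdzz 3).
Qed.

Lemma recurrence_mod4 (s0 s1 s2 : int) :
  (4 %| s2 + 12 * s1 + 16 * s0)%Z -> (s2 = 0 %[mod 4])%Z.
Proof.
move=> rec3; apply/eqP; rewrite eqz_mod_dvd subr0.
have -> : (s2 = s2 + 12 * s1 + 16 * s0 - (3 * s1 + 4 * s0) * 4)%Z by ring.
by rewrite rpredB //; exact: dvdz_mull (dvdzz 4).
Qed.

Theorem lemma4 :
  (forall n : nat,
      (S (3 * n) = S (3 * n + 1) %[mod 3])%Z /\
      (S (3 * n + 1) = - S (3 * n + 2) %[mod 3])%Z) /\
  (forall n : nat, (S (4 * n + 2) = 0 %[mod 4])%Z) /\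
  (forall n : nat, (0 < n)%N ->
      (S (n + 2) + 12 * S (n + 1) + 16 * S n = 0 %[mod n%:Z])%Z).
Proof.
split; [|split] => n.
- have dvd3 : (3 %| (3 * n)%:Z)%Z by rewrite dvdzE /= dvdn_mulr.
  apply: recurrences_mod3; apply: dvdz_trans dvd3 _.
    exact: dvdz_S_rec3.
  exact: dvdz_S_rec2.
- have dvd4 : (4 %| (4 * n)%:Z)%Z by rewrite dvdzE /= dvdn_mulr.
  exact/recurrence_mod4/(dvdz_trans dvd4)/dvdz_S_rec3.
- by move=> _; apply/eqP; rewrite eqz_mod_dvd subr0 dvdz_S_rec3.
Qed.
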